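(* In the line model below, for all positive integers $k,N$ there is a deterministic protocol after which player $P_{k+1}$ knows $\mathbf{A}_k\mathbf{A}_{k-1}\cdots\mathbf{A}_1\mathbf{x}$ (over $\mathbb{F}_2$), using $O(N^2\log_2(2k)+k)$ rounds.
   Context: Line model: players $P_0,\dots,P_{k+1}$ with links $\{P_{i-1},P_i\}$ for $i\in[k+1]$; $P_0$ holds $\mathbf{x}\in\mathbb{F}_2^N$, $P_i$ holds $\mathbf{A}_i\in\mathbb{F}_2^{N\times N}$ for $i\in[k]$, $P_{k+1}$ has no input. Communication is synchronous in rounds, one bit per link per round; local computation is free. *)

From HB Require Import structures.
From mathcomp Require Import all_boot all_order all_algebra.
Set Implicit Arguments. Unset Strict Implicit. Unset Printing Implicit Defensive.
Import GRing.Theory.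
Local Open Scope ring_scope.

Notation F2 := 'F_2.

(* Local input of a player: a column vector and a matrix.
   P_0 gets (x, 0); P_i (1 <= i <= k) gets (0, A_i); P_{k+1} gets (0, 0). *)
Definition LI (N : nat) := ('cV[F2]_N * 'M[F2]_N)%type.

(* Bits carried by the k+1 links in one round; link j joins P_j and P_{j+1}. *)
Definition RoundBits (k : nat) := 'I_k.+1 -> bool.

(* What player i observes in one round: bit on its left link, bit on its right link. *)
Definition Obs := (option bool * option bool)%type.

Definition obs_of (k : nat) (i : 'I_k.+2) (b : RoundBits k) : Obs :=
  ((if (0 < i)%N then Some (b (inord i.-1)) else None),
   (if (i < k.+1)%N then Some (b (inord i)) else None)).

Definition view (k : nat) (i : 'I_k.+2) (H : seq (RoundBits k)) : seq Obs :=
  map (obs_of i) H.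

(* A deterministic protocol on the line with players P_0..P_{k+1}.
   - dir r j : direction used on link j in round r (true = from P_j to P_{j+1},
     false = from P_{j+1} to P_j); a fixed schedule, so each link carries
     exactly one bit per round.
   - msg i r li v : the bits (towards left, towards right) that player i would
     send in round r, as a function of its own local input and its view so far.
   - out : the output function of P_{k+1}, from its final view. *)
Record protocol (k N : nat) := Protocol {
  dir : nat -> 'I_k.+1 -> bool;
  msg : 'I_k.+2 -> nat -> LI N -> seq Obs -> bool * bool;
  out : seq Obs -> 'cV[F2]_N
}.

Definition local_input (k N : nat) (x : 'cV[F2]_N) (A : nat -> 'M[F2]_N)
    (i : 'I_k.+2) : LI N :=
  if i == 0 :> nat then (x, 0)
  else if (i <= k)%N then (0, A (nat_of_ord i))
  else (0, 0).

Fixpoint history (k N : nat) (p : protocol k N) (x : 'cV[F2]_N)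
    (A : nat -> 'M[F2]_N) (r : nat) : seq (RoundBits k) :=
  match r with
  | 0 => [::]
  | r'.+1 =>
    let H := history p x A r' in
    rcons H (fun j : 'I_k.+1 =>
      if dir p r' j then
        let s : 'I_k.+2 := inord j in
        (msg p s r' (local_input x A s) (view s H)).2
      else
        let s : 'I_k.+2 := inord j.+1 in
        (msg p s r' (local_input x A s) (view s H)).1)
  end.

Definition prod_apply (k N : nat) (A : nat -> 'M[F2]_N) (x : 'cV[F2]_N)
    : 'cV[F2]_N :=
  foldl (fun y i => A i *m y) x (iota 1 k).

Definition computes_in (k N : nat) (p : protocol k N) (T : nat) : Prop :=
  forall (x : 'cV[F2]_N) (A : nat -> 'M[F2]_N),
    out p (view (@ord_max k.+1) (history p x A T)) = prod_apply k A x.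

From mathcomp Require Import all_boot all_order all_algebra.
From mathcomp Require Import zify.
From Stdlib Require Import FunctionalExtensionality.
Set Implicit Arguments. Unset Strict Implicit. Unset Printing Implicit Defensive.
Import GRing.Theory.

(* Every message flows rightwards.  Let X be the matrix all of whose columns
   are x and write A_0 := X, so that A_k ... A_1 X has A_k ... A_1 x in every
   column.  In phase t (t < m, with 2^m the largest power of 2 below 2k + 1, so
   2^m > k) every player j with 2^(t+1) | k - j and j >= 2^t receives from
   player j - 2^t the product of the 2^t factors ending at A_(j - 2^t), relayed
   bit by bit by the players in between, and multiplies it into its own
   product; pipelining makes the phase last N^2 + 2^t rounds.  Afterwards
   player k holds A_k ... A_0 and uploads it to P_(k+1) in N^2 rounds, for a
   total of (m + 1) N^2 + 2^m - 1 <= 2 (N^2 m + k) rounds. *)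

Lemma F2_nat_neq0 (z : 'F_2) : ((z != 0)%:R : 'F_2)%R = z.
Proof. by move: z => [[|[|n]] Hn]; apply/val_inj. Qed.

Lemma modn_sub_half K P h : 0 < P -> K %% (2 * P) = P -> h <= P ->
  (K - h) %% (2 * P) = P - h.
Proof.
move=> P_gt0 KP hP; rewrite {1}(divn_eq K (2 * P)) KP; move: (K %/ (2 * P)) => c.
have -> : c * (2 * P) + P - h = c * (2 * P) + (P - h) by lia.
by rewrite modnMDl modn_small //; lia.
Qed.

Section BitEncoding.

Variable N : nat.

Definition mx_bit (M : 'M[F2]_N) (q : nat) : bool :=
  if (insub q : option 'I_(N * N)) is Some i then (mxvec M 0 i != 0)%R else false.

Definition bits_mx (s : nat -> bool) (r0 : nat) : 'M[F2]_N :=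
  vec_mx (\row_(i < N * N) ((s (r0 + i))%:R : F2))%R.

Lemma eq_bits_mx s1 s2 r0 :
  (forall q, q < N * N -> s1 (r0 + q) = s2 (r0 + q)) -> bits_mx s1 r0 = bits_mx s2 r0.
Proof. by move=> eq_s; congr vec_mx; apply/rowP => i; rewrite !mxE eq_s. Qed.

Lemma bits_mxK s r0 (M : 'M[F2]_N) :
  (forall q, q < N * N -> s (r0 + q) = mx_bit M q) -> bits_mx s r0 = M.
Proof.
move=> sM; rewrite /bits_mx -[RHS]mxvecK; congr vec_mx; apply/rowP => i.
by rewrite !mxE sM // /mx_bit valK F2_nat_neq0.
Qed.

End BitEncoding.

Fixpoint phase_start (N t : nat) : nat :=
  if t is t'.+1 then phase_start N t' + N * N + 2 ^ t' else 0.

Lemma phase_start_mono N a b : a <= b -> phase_start N a <= phase_start N b.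
Proof.
elim: b => [|b IH]; first by rewrite leqn0 => /eqP ->.
by rewrite leq_eqVlt => /orP [/eqP -> //|]; rewrite ltnS => /IH /=; lia.
Qed.

Lemma phase_startE N t : phase_start N t + 1 = t * (N * N) + 2 ^ t.
Proof. by elim: t => [//|t IH] /=; rewrite expnS; lia. Qed.

Section Strategy.

Variables (k N m : nat).

Definition copies_mx (x : 'cV[F2]_N) : 'M[F2]_N := \matrix_(a, b) x a ord0.

Definition init_mx (li : LI N) (j : nat) : 'M[F2]_N :=
  if j == 0 then copies_mx li.1 else li.2.

(* The matrix received in phase [t'] arrives after the [2^t' - 1] relays
   between its sender and its receiver. *)
Fixpoint held_mx (j : nat) (li : LI N) (s : nat -> bool) (t : nat) : 'M[F2]_N :=
  if t is t'.+1 then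
    if (2 ^ t %| k - j) && (2 ^ t' <= j) then
      (held_mx j li s t' *m bits_mx N s (phase_start N t' + 2 ^ t' - 1))%R
    else held_mx j li s t'
  else init_mx li j.

(* In phase [t], player [j] is a sender when [k - j = 2^t (mod 2^(t+1))] and a
   relay when it lies strictly between a sender and its receiver. *)
Definition phase_bit (j : nat) (li : LI N) (s : nat -> bool) (r t : nat) : bool :=
  let d := (k - j) %% 2 ^ t.+1 in
  if d == 2 ^ t then mx_bit (held_mx j li s t) (r - phase_start N t)
  else if (0 < d) && (d < 2 ^ t) then s r.-1 else false.

Fixpoint doubling_bit (j : nat) (li : LI N) (s : nat -> bool) (r u : nat) : bool :=
  if u is t.+1 then
    if phase_start N t <= r then phase_bit j li s r t else doubling_bit j li s r t
  else false.

Definition player_bit (j : nat) (li : LI N) (s : nat -> bool) (r : nat) : bool :=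
  if (j == k) && (phase_start N m <= r) then
    mx_bit (held_mx j li s m) (r - phase_start N m)
  else doubling_bit j li s r m.

(* In round [r] a player has only seen the bits of the earlier rounds. *)
Definition causal_bit (j : nat) (li : LI N) (s : nat -> bool) (r : nat) : bool :=
  player_bit j li (fun r' => if r' < r then s r' else false) r.

Lemma eq_held_mx j li s1 s2 t :
  (forall r, r < phase_start N t -> s1 r = s2 r) ->
  held_mx j li s1 t = held_mx j li s2 t.
Proof.
elim: t => [//|t IH] eq_s /=.
rewrite IH; last by move=> r Hr; apply: eq_s => /=; lia.
by rewrite (@eq_bits_mx N s1 s2) // => q Hq; apply: eq_s => /=; lia.
Qed.

Lemma doubling_bit_phase j li s r t u :
  phase_start N t <= r < phase_start N t.+1 -> t < u ->
  doubling_bit j li s r u = phase_bit j li s r t.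
Proof.
move=> /andP [r_ge r_lt]; elim: u => [//|u IH].
rewrite ltnS leq_eqVlt => /orP [/eqP <-|tu] /=; first by rewrite r_ge.
have := phase_start_mono N tu; case: (leqP (phase_start N u) r) => [|_ _]; first lia.
exact: IH.
Qed.

Lemma eq_causal_bit j li s1 s2 r :
  (forall r', r' < r -> s1 r' = s2 r') -> causal_bit j li s1 r = causal_bit j li s2 r.
Proof.
move=> eq_s; rewrite /causal_bit; congr player_bit.
by apply: functional_extensionality => r'; case: ifP => // /eq_s.
Qed.

End Strategy.

Section Run.

Variables (k N m : nat) (x : 'cV[F2]_N) (A : nat -> 'M[F2]_N).

Definition input_of (j : nat) : LI N := local_input x A (inord j : 'I_k.+2).

(* Link [j] only depends on the links to its left, hence the recursion on [j]. *)
Fixpoint link_bits (j : nat) : nat -> bool :=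
  if j is j'.+1 then causal_bit k m j'.+1 (input_of j'.+1) (link_bits j')
  else causal_bit k m 0 (input_of 0) (fun _ => false).

Definition left_bits (j : nat) : nat -> bool :=
  if j is j'.+1 then link_bits j' else fun _ => false.

Lemma link_bitsE j : link_bits j = causal_bit k m j (input_of j) (left_bits j).
Proof. by case: j. Qed.

Definition held j := held_mx k j (input_of j) (left_bits j).

Lemma relay_bits t j0 h q : t < m -> (k - j0) %% 2 ^ t.+1 = 2 ^ t -> h < 2 ^ t ->
  q < N * N -> link_bits (j0 + h) (phase_start N t + h + q) = mx_bit (held j0 t) q.
Proof.
move=> tm j0_sender; have P_gt0 : 0 < 2 ^ t by rewrite expn_gt0.
have in_phase r : phase_start N t <= r < phase_start N t + N * N + 2 ^ t ->
  forall j (li : LI N) s, doubling_bit k j li s r m = phase_bit k j li s r t.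
  by move=> r_phase j li s; apply: doubling_bit_phase.
elim: h => [|h IH] h_lt q_lt; rewrite ?addnS link_bitsE /causal_bit /player_bit.
- have -> : (j0 + 0 == k) = false.
    by apply/negbTE/eqP => E; move: j0_sender; rewrite -E addn0 subnn mod0n; lia.
  rewrite /= in_phase; last lia.
  rewrite /phase_bit addn0 j0_sender eqxx.
  have -> : phase_start N t + 0 + q - phase_start N t = q by lia.
  by congr mx_bit; apply: eq_held_mx => r Hr; rewrite ifT //; lia.
- have relay_pos : (k - (j0 + h).+1) %% 2 ^ t.+1 = 2 ^ t - h.+1.
    by rewrite -addnS subnDA expnS; apply: modn_sub_half => //; [by rewrite -expnS | lia].
  have -> : ((j0 + h).+1 == k) = false.
    by apply/negbTE/eqP => E; move: relay_pos; rewrite E subnn mod0n; lia.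
  rewrite /= in_phase; last lia.
  rewrite /phase_bit relay_pos ifN_eq; last lia.
  rewrite ifT; last by apply/andP; split; lia.
  rewrite ifT; last lia.
  rewrite addSn /=.
  by apply: IH; lia.
Qed.

Definition factor (j : nat) : 'M[F2]_N := if j == 0 then copies_mx x else A j.

Fixpoint factor_prod (a n : nat) : 'M[F2]_N :=
  if n is n'.+1 then (factor (a + n') *m factor_prod a n')%R else 1%:M.

Definition factor_range (a b : nat) : 'M[F2]_N := factor_prod a (b - a).

Lemma factor_prodD a n1 n2 :
  factor_prod a (n1 + n2) = (factor_prod (a + n1) n2 *m factor_prod a n1)%R.
Proof.
elim: n2 => [|n2 IH]; first by rewrite addn0 /= mul1mx.
by rewrite addnS /= IH mulmxA addnA.
Qed.

Lemma factor_range_split a b c : a <= b -> b <= c ->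
  (factor_range b c *m factor_range a b)%R = factor_range a c.
Proof.
move=> ab bc; rewrite /factor_range.
have -> : c - a = (b - a) + (c - b) by lia.
by rewrite factor_prodD subnKC.
Qed.

Lemma init_mx_input j : j <= k -> init_mx (input_of j) j = factor j.
Proof.
move=> jk; rewrite /init_mx /input_of /local_input /factor inordK; last lia.
by case: j jk => [|j] //= ->.
Qed.

Lemma heldE t : t <= m -> forall j, j <= k -> 2 ^ t %| k - j ->
  held j t = factor_range (j.+1 - 2 ^ t) j.+1.
Proof.
rewrite /held; elim: t => [|t IH] tm j jk dvd_j.
  by rewrite /= init_mx_input // /factor_range subn1 /= subSnn /= addn0 mulmx1.
have P_gt0 : 0 < 2 ^ t by rewrite expn_gt0.
have dvd_j' : 2 ^ t %| k - j by apply: dvdn_trans dvd_j; apply: dvdn_exp2l.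
rewrite /= dvd_j IH //; last lia.
case: leqP => j_ge /=; last first.
  rewrite expnS; have -> : j.+1 - 2 ^ t = 0 by lia.
  by have -> : j.+1 - 2 * 2 ^ t = 0 by lia.
set P := 2 ^ t in P_gt0 dvd_j' j_ge *.
have dvd_sender : P %| k - (j - P).
  have -> : k - (j - P) = (k - j) + P by lia.
  by rewrite dvdn_add.
have sender : (k - (j - P)) %% 2 ^ t.+1 = P.
  case/dvdnP: dvd_j => c Hc.
  have -> : k - (j - P) = c * 2 ^ t.+1 + P by lia.
  by rewrite modnMDl modn_small // expnS; lia.
have received : bits_mx N (left_bits j) (phase_start N t + P - 1) = held (j - P) t.
  apply: bits_mxK => q q_lt.
  have -> : phase_start N t + P - 1 + q = phase_start N t + (P - 1) + q by lia.
  rewrite {1}(_ : j = (j - P + (P - 1)).+1); last lia.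
  by apply: relay_bits; lia.
rewrite received /held (IH (ltnW tm)) //; last lia.
rewrite expnS -/P.
have -> : (j - P).+1 - P = j.+1 - 2 * P by lia.
have -> : (j - P).+1 = j.+1 - P by lia.
by apply: factor_range_split; lia.
Qed.

Lemma final_upload q : q < N * N ->
  link_bits k (phase_start N m + q) = mx_bit (held k m) q.
Proof.
move=> q_lt; rewrite link_bitsE /causal_bit /player_bit eqxx leq_addr /=.
have -> : phase_start N m + q - phase_start N m = q by lia.
by congr mx_bit; apply: eq_held_mx => r Hr; rewrite ifT //; lia.
Qed.

Lemma foldl_factor_prod n a (y : 'cV[F2]_N) : 0 < a ->
  foldl (fun y i => (A i *m y)%R) y (iota a n) = (factor_prod a n *m y)%R.
Proof.
elim: n a y => [|n IH] a y a_gt0; first by rewrite /= mul1mx.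
rewrite [foldl _ _ _]/= IH; last lia.
rewrite (_ : n.+1 = 1 + n) // factor_prodD /= addn0 mulmx1 /factor -mulmxA addn1.
by rewrite ifN //; lia.
Qed.

End Run.

Definition left_bit_of_view (v : seq Obs) (r : nat) : bool :=
  if nth (None, None) v r is (Some b, _) then b else false.

Definition doubling_protocol (k N m : nat) (i0 : 'I_N) : protocol k N :=
  Protocol (fun _ _ => true)
    (fun (i : 'I_k.+2) r (li : LI N) v => (false, causal_bit k m i li (left_bit_of_view v) r))
    (fun v => (\col_a (bits_mx N (left_bit_of_view v) (phase_start N m)) a i0)%R).

Section History.

Variables (k N m : nat) (x : 'cV[F2]_N) (A : nat -> 'M[F2]_N).

Definition link_history (r : nat) : seq (RoundBits k) :=
  mkseq (fun r' (i : 'I_k.+1) => link_bits k m x A i r') r.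

Lemma left_bit_of_viewE r (j : 'I_k.+2) r' : r' < r ->
  left_bit_of_view (view j (link_history r)) r' = left_bits k m x A j r'.
Proof.
move=> r'_lt; rewrite /left_bit_of_view /view (nth_map (fun _ : 'I_k.+1 => false)).
  by rewrite nth_mkseq // /obs_of; case: j => [[|j] Hj] //=; rewrite inordK //; lia.
by rewrite size_mkseq.
Qed.

Lemma history_doubling (i0 : 'I_N) r :
  history (doubling_protocol k m i0) x A r = link_history r.
Proof.
elim: r => [//|r IH] /=; rewrite IH /link_history mkseqS; congr rcons.
apply: functional_extensionality => j.
have j_lt : (j : nat) < k.+2 by case: j => /= j; lia.
rewrite inordK // link_bitsE /input_of.
by apply: eq_causal_bit => r' r'_lt; rewrite left_bit_of_viewE // inordK.
Qed.

End History.

Theorem mainTheorem5 :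
  exists C : nat, forall k N : nat, (0 < k)%N -> (0 < N)%N ->
    exists (p : protocol k N) (T : nat),
      computes_in p T /\ (T <= C * (N ^ 2 * trunc_log 2 (2 * k) + k))%N.
Proof.
exists 2 => k N k_gt0 N_gt0; set m := trunc_log 2 (2 * k).
have m_ub : 2 ^ m <= 2 * k by apply: trunc_logP; lia.
have m_lb : k < 2 ^ m by rewrite -(ltn_pmul2l (isT : 0 < 2)) -expnS trunc_log_ltn.
have m_gt0 : 0 < m by apply: trunc_log_max => //; lia.
exists (doubling_protocol k m (Ordinal N_gt0)), (phase_start N m + N * N); split.
  move=> x A; rewrite /= history_doubling.
  have received : bits_mx N (left_bit_of_view (view ord_max (link_history k m x A
      (phase_start N m + N * N)))) (phase_start N m) = held k m x A k m.
    apply: bits_mxK => q q_lt; rewrite left_bit_of_viewE; last lia.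
    exact: final_upload.
  rewrite received heldE // ?subnn ?dvdn0 // (_ : k.+1 - 2 ^ m = 0); last lia.
  rewrite /prod_apply (foldl_factor_prod x) // /factor_range subn0.
  rewrite (_ : k.+1 = 1 + k) // factor_prodD /= mulmx1 /factor /=.
  by apply/matrixP => a b; rewrite ord1 !mxE; apply: eq_bigr => c _; rewrite !mxE.
have NN_le : N * N <= m * (N * N) by rewrite leq_pmull.
have -> : N ^ 2 * m = m * (N * N) by rewrite mulnC expnS expn1.
have := phase_startE N m; clearbody m; lia.
Qed.
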